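(* Let $\mathfrak{h}_3$ be the (real, 3-dimensional) Heisenberg Lie algebra and $\mathrm{ad}^*$ its coadjoint representation on the dual space $\mathfrak{h}_3^*$. Up to isometric Lie algebra isomorphism, every butterfly algebra is $\mathfrak{b}_6=\mathfrak{h}_3\oplus_{\mathrm{ad}^*}\mathfrak{h}_3^*$ with the bilinear form $$(X+X^*,\,Y+Y^* )=X^*(Y)+Y^*(X)$$ for $X,Y\in\mathfrak{h}_3$ and $X^*,Y^*\in\mathfrak{h}_3^*$.
   Context: A butterfly algebra is a real 2-step nilpotent Lie algebra of dimension $6$ endowed with a symmetric bilinear form $(\cdot,\cdot)$ that is invariant, i.e. $([X,Y],Z)=-(Y,[X,Z])$, such that some element of its commutator subalgebra is not in the radical $\{X\mid (X,\cdot)=0\}$ of the form. The semidirect sum $\mathfrak{h}_3\oplus_{\mathrm{ad}^*}\mathfrak{h}_3^*$ is the vector space $\mathfrak{h}_3\oplus\mathfrak{h}_3^*$ with bracket $[X+\xi,Y+\eta]=[X,Y]+\mathrm{ad}^*(X)\eta-\mathrm{ad}^*(Y)\xi$, where $\mathrm{ad}^*(X)\eta=-\eta\circ\mathrm{ad}(X)$, and $\mathfrak{h}_3^*$ is an abelian ideal. *)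

From HB Require Import structures.
From mathcomp Require Import all_boot all_order all_algebra.
From mathcomp Require Import reals.
Set Implicit Arguments. Unset Strict Implicit. Unset Printing Implicit Defensive.
Import Order.TTheory GRing.Theory Num.Theory.
Local Open Scope ring_scope.

Section Abstract.
Variables (R : realType) (V : vectType R).

Definition lie_bracket (br : V -> V -> V) : Prop :=
  [/\ forall (a : R) x y z, br (a *: x + y) z = a *: br x z + br y z,
      forall (a : R) x y z, br x (a *: y + z) = a *: br x y + br x z,
      forall x, br x x = 0 &
      forall x y z, br x (br y z) + br y (br z x) + br z (br x y) = 0].

Definition two_step_nilpotent (br : V -> V -> V) : Prop :=
  (forall x y z, br (br x y) z = 0) /\ (exists x y, br x y != 0).

Definition sym_bilinear (B : V -> V -> R) : Prop :=
  (forall (a : R) x y z, B (a *: x + y) z = a * B x z + B y z) /\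
  (forall x y, B x y = B y x).

Definition invariant_form (br : V -> V -> V) (B : V -> V -> R) : Prop :=
  forall x y z, B (br x y) z = - B y (br x z).

Definition in_commutator (br : V -> V -> V) (Z : V) : Prop :=
  exists (n : nat) (xs ys : 'I_n -> V), Z = \sum_(i < n) br (xs i) (ys i).

Definition in_radical (B : V -> V -> R) (Z : V) : Prop :=
  forall W, B Z W = 0.

Definition butterfly_algebra (br : V -> V -> V) (B : V -> V -> R) : Prop :=
  [/\ \dim (fullv : {vspace V}) = 6%N,
      lie_bracket br /\ two_step_nilpotent br,
      sym_bilinear B, invariant_form br B &
      exists Z, in_commutator br Z /\ ~ in_radical B Z].
End Abstract.

Section Model.
Variable R : realType.

(* h3 = R^3 with basis e_0,e_1,e_2 and [e_0,e_1] = e_2 *)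
Definition h3 := 'rV[R]_3.
Definition h3br (x y : h3) : h3 :=
  \row_(j < 3) (if j == 2%N :> nat then x 0 0 * y 0 1 - x 0 1 * y 0 0 else 0).

(* h3^* represented by coordinates in the dual basis; pairing xi(Y) *)
Definition h3dual := 'rV[R]_3.
Definition dpair (xi : h3dual) (y : h3) : R := \sum_(i < 3) xi 0 i * y 0 i.

(* ad^*(X) eta = - eta o ad(X), in dual-basis coordinates:
   its j-th coordinate is (ad^*(X) eta)(e_j) = - eta([X, e_j]) *)
Definition adstar (x : h3) (eta : h3dual) : h3dual :=
  \row_(j < 3) (- dpair eta (h3br x (delta_mx 0 j))).

Definition b6 := (h3 * h3dual)%type.

Definition b6br (u v : b6) : b6 :=
  (h3br u.1 v.1, adstar u.1 v.2 - adstar v.1 u.2).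

Definition b6form (u v : b6) : R := dpair u.2 v.1 + dpair v.2 u.1.
End Model.

Definition isometric_iso (R : realType) (V : vectType R)
    (br : V -> V -> V) (B : V -> V -> R) (phi : V -> b6 R) : Prop :=
  [/\ forall (a : R) x y, phi (a *: x + y) =
        (a *: (phi x).1 + (phi y).1, a *: (phi x).2 + (phi y).2),
      bijective phi,
      forall x y, phi (br x y) = b6br (phi x) (phi y) &
      forall x y, b6form (phi x) (phi y) = B x y].

From HB Require Import structures.
From mathcomp Require Import all_boot all_order all_algebra.
From mathcomp Require Import boolp reals ring lra.
Set Implicit Arguments. Unset Strict Implicit. Unset Printing Implicit Defensive.
Import Order.TTheory GRing.Theory Num.Theory.
Local Open Scope ring_scope.

(** Invariance and symmetry make T(x, y, z) := ([x, y], z) an alternating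
    trilinear form, and since brackets of brackets vanish, T only sees V modulo
    the commutator ideal.  A commutator outside the radical yields a, b, c with
    T(a, b, c) = 1; correcting a, b, c by commutators (which are central and
    isotropic) makes span{a, b, c} isotropic without changing T(a, b, c).  Then
    (a, b, [a, b]) and ([b, c], [c, a], c) are dual isotropic triples, hence a
    basis of the 6-dimensional V, and in these coordinates the bracket and the
    form of V are exactly those of h3 (+)_{ad^*} h3^*. *)

Section Form.
Variables (R : realType) (V : vectType R) (B : V -> V -> R).
Hypothesis HB : sym_bilinear B.

Lemma formC x y : B x y = B y x. Proof. by case: HB. Qed.

Lemma formDl x y z : B (x + y) z = B x z + B y z.
Proof. by case: HB => H _; have := H 1 x y z; rewrite scale1r mul1r. Qed.

Lemma form0l z : B 0 z = 0.
Proof.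
by have := formDl 0 0 z; rewrite addr0 => E; apply: (addrI (B 0 z)); rewrite -E addr0.
Qed.

Lemma formZl k x z : B (k *: x) z = k * B x z.
Proof. by case: HB => H _; rewrite -[k *: x]addr0 H form0l addr0. Qed.

Lemma formNl x z : B (- x) z = - B x z.
Proof. by rewrite -scaleN1r formZl mulN1r. Qed.

Lemma formDr x y z : B z (x + y) = B z x + B z y.
Proof. by rewrite formC formDl !(formC z). Qed.

Lemma formZr k x z : B z (k *: x) = k * B z x.
Proof. by rewrite formC formZl formC. Qed.

Lemma formNr x z : B z (- x) = - B z x.
Proof. by rewrite formC formNl formC. Qed.

Lemma form0r z : B z 0 = 0.
Proof. by rewrite formC form0l. Qed.

Lemma form_suml n (F : 'I_n -> V) z :
  B (\sum_(i < n) F i) z = \sum_(i < n) B (F i) z.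
Proof. by apply: (big_morph (B^~ z)) => [x y|]; rewrite ?formDl ?form0l. Qed.

Section DualFamily.
Variables (n : nat) (X Y : n.-tuple V).
Hypothesis XY_dual : forall i j : 'I_n, B X`_i Y`_j = (i == j)%:R.

Lemma form_dual_sum (k : 'I_n -> R) (j : 'I_n) :
  B (\sum_(i < n) k i *: X`_i) Y`_j = k j.
Proof.
rewrite form_suml (bigD1 j) //= formZl XY_dual eqxx mulr1 big1 ?addr0 //.
by move=> i /negPf ij; rewrite formZl XY_dual ij mulr0.
Qed.

Lemma free_dual_family : free X.
Proof. by apply/freeP => k Xk j; rewrite -(form_dual_sum k) Xk form0l. Qed.

Lemma dual_family_expand :
  \dim (fullv : {vspace V}) = n -> forall x, x = \sum_(i < n) B x Y`_i *: X`_i.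
Proof.
move=> dimV x.
have /eqP spanX : (<<X>> == fullv)%VS.
  rewrite eqEdim subvf dimV; move: free_dual_family => /eqnP ->.
  by rewrite size_tuple leqnn.
have /coord_span Ex : x \in <<X>>%VS by rewrite spanX memvf.
by rewrite {1}Ex; apply: eq_bigr => i _; rewrite [in RHS]Ex form_dual_sum.
Qed.

End DualFamily.
End Form.

Section Bracket.
Variables (R : realType) (V : vectType R) (br : V -> V -> V).
Hypothesis Hbr : lie_bracket br.

Lemma brDl x y z : br (x + y) z = br x z + br y z.
Proof. by case: Hbr => H _ _ _; have := H 1 x y z; rewrite !scale1r. Qed.

Lemma br0l z : br 0 z = 0.
Proof.
by have := brDl 0 0 z; rewrite addr0 => E; apply: (addrI (br 0 z)); rewrite -E addr0.
Qed.

Lemma brZl k x z : br (k *: x) z = k *: br x z.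
Proof. by case: Hbr => H _ _ _; rewrite -[k *: x]addr0 H br0l addr0. Qed.

Lemma brNl x z : br (- x) z = - br x z.
Proof. by rewrite -scaleN1r brZl scaleN1r. Qed.

Lemma brDr x y z : br z (x + y) = br z x + br z y.
Proof. by case: Hbr => _ H _ _; have := H 1 z x y; rewrite !scale1r. Qed.

Lemma br0r z : br z 0 = 0.
Proof.
by have := brDr 0 0 z; rewrite addr0 => E; apply: (addrI (br z 0)); rewrite -E addr0.
Qed.

Lemma brZr k x z : br z (k *: x) = k *: br z x.
Proof. by case: Hbr => _ H _ _; rewrite -[k *: x]addr0 H br0r addr0. Qed.

Lemma brNr x z : br z (- x) = - br z x.
Proof. by rewrite -scaleN1r brZr scaleN1r. Qed.

Lemma brxx x : br x x = 0. Proof. by case: Hbr. Qed.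

Lemma br_anticomm x y : br y x = - br x y.
Proof.
have := brxx (x + y); rewrite brDl !brDr !brxx add0r addr0 => /eqP.
by rewrite addr_eq0 => /eqP ->; rewrite opprK.
Qed.

End Bracket.

Section MetricLie.
Variables (R : realType) (V : vectType R) (br : V -> V -> V) (B : V -> V -> R).
Hypotheses (Hbr : lie_bracket br) (HB : sym_bilinear B).
Hypothesis Hinv : invariant_form br B.

Lemma form_br_swap x y z : B (br x y) z = - B (br x z) y.
Proof. by rewrite Hinv (formC HB). Qed.

Lemma form_br_self_r x y : B (br x y) y = 0.
Proof. have := form_br_swap x y y; lra. Qed.

Lemma form_br_self_l x y : B (br x y) x = 0.
Proof. by rewrite (br_anticomm Hbr) (formNl HB) form_br_self_r oppr0. Qed.

Lemma form_br_cycle x y z : B (br x y) z = B (br y z) x.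
Proof.
rewrite form_br_swap (br_anticomm Hbr z) (formNl HB) opprK form_br_swap.
by rewrite (br_anticomm Hbr y) (formNl HB) opprK.
Qed.

Lemma commutator_nonradical_pairing Z :
  in_commutator br Z -> ~ in_radical B Z -> exists x y z, B (br x y) z = 1.
Proof.
move=> [n [xs [ys ->]]] /existsNP [w].
rewrite (form_suml HB) => /eqP sum_neq0.
have [i Ti] : exists i, B (br (xs i) (ys i)) w != 0.
  apply/existsP; apply: contraNT sum_neq0 => /existsPn vanish.
  by rewrite big1 // => i _; apply/eqP/negPn/vanish.
exists ((B (br (xs i) (ys i)) w)^-1 *: xs i), (ys i), w.
by rewrite (brZl Hbr) (formZl HB) mulVf.
Qed.

Section TwoStep.
Hypothesis Hnil : forall x y z, br (br x y) z = 0.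

Lemma br_brr x y z : br z (br x y) = 0.
Proof. by rewrite (br_anticomm Hbr) Hnil oppr0. Qed.

Lemma form_br_br p q r s : B (br p q) (br r s) = 0.
Proof. by rewrite Hinv br_brr (form0r HB) oppr0. Qed.

Ltac bilin := rewrite ?(formDl HB, formDr HB, formZl HB, formZr HB, formNl HB,
  formNr HB, form0l HB, form0r HB).
Ltac brlin := rewrite ?(brDl Hbr, brDr Hbr, brZl Hbr, brZr Hbr, brNl Hbr,
  brNr Hbr, Hnil, br_brr, brxx Hbr, scaler0, addr0, add0r, oppr0).

(* Commutators are central and isotropic, so subtracting multiples of them
   keeps T(a, b, c) = 1 while killing the Gram matrix of span{a, b, c}. *)
Lemma isotropic_triple a0 b0 c0 : B (br a0 b0) c0 = 1 -> exists a b c,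
  [/\ [/\ B a a = 0, B b b = 0 & B c c = 0],
      [/\ B a b = 0, B b c = 0 & B a c = 0] & B (br a b) c = 1].
Proof.
move=> Tabc; have Tbca : B (br b0 c0) a0 = 1 by rewrite -form_br_cycle.
have Tcab : B (br c0 a0) b0 = 1 by rewrite -form_br_cycle.
exists (a0 - (B a0 a0 / 2) *: br b0 c0),
  (b0 - (B b0 b0 / 2) *: br c0 a0 - B a0 b0 *: br b0 c0),
  (c0 - (B c0 c0 / 2) *: br a0 b0 - B a0 c0 *: br b0 c0 - B b0 c0 *: br c0 a0).
do !split; brlin; bilin;
  rewrite ?form_br_br ?[B _ (br _ _)](formC HB) ?form_br_self_l ?form_br_self_r
    ?Tabc ?Tbca ?Tcab ?(formC HB b0 a0) ?(formC HB c0 a0) ?(formC HB c0 b0);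
  by field.
Qed.

Section Coordinates.
Hypothesis dimV : \dim (fullv : {vspace V}) = 6%N.
Variables a b c : V.
Hypotheses (Baa : B a a = 0) (Bbb : B b b = 0) (Bcc : B c c = 0).
Hypotheses (Bab : B a b = 0) (Bbc : B b c = 0) (Bac : B a c = 0).
Hypothesis Tabc : B (br a b) c = 1.

Let Bba : B b a = 0. Proof. by rewrite (formC HB). Qed.
Let Bcb : B c b = 0. Proof. by rewrite (formC HB). Qed.
Let Bca : B c a = 0. Proof. by rewrite (formC HB). Qed.
Let Tbca : B (br b c) a = 1. Proof. by rewrite -form_br_cycle. Qed.
Let Tcab : B (br c a) b = 1. Proof. by rewrite -form_br_cycle. Qed.

Ltac gram := rewrite ?form_br_br ?[B _ (br _ _)](formC HB) ?form_br_self_l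
  ?form_br_self_r ?Tabc ?Tbca ?Tcab ?Baa ?Bbb ?Bcc ?Bab ?Bba ?Bbc ?Bcb ?Bac ?Bca.

Let X := in_tuple [:: a; b; br a b; br b c; br c a; c].
Let Y := in_tuple [:: br b c; br c a; c; a; b; br a b].

Lemma dual_basis (i j : 'I_6) : B X`_i Y`_j = (i == j)%:R.
Proof.
by case: i j => [[|[|[|[|[|[|i]]]]]] Hi] [[|[|[|[|[|[|j]]]]]] Hj] //=; gram.
Qed.

Lemma expand_coords x :
  x = B x (br b c) *: a + B x (br c a) *: b + B x c *: br a b
    + B x a *: br b c + B x b *: br c a + B x (br a b) *: c.
Proof.
rewrite {1}(dual_family_expand HB dual_basis dimV x).
by rewrite !big_ord_recl big_ord0 /= addr0 !addrA.
Qed.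

Lemma coords_eq0 x : B x (br b c) = 0 -> B x (br c a) = 0 -> B x c = 0 ->
  B x a = 0 -> B x b = 0 -> B x (br a b) = 0 -> x = 0.
Proof.
move=> E0 E1 E2 E3 E4 E5.
by rewrite (expand_coords x) E0 E1 E2 E3 E4 E5 !scale0r !addr0.
Qed.

Lemma bracket_coords x y : br x y =
  (B x (br b c) * B y (br c a) - B x (br c a) * B y (br b c)) *: br a b +
  (B x (br c a) * B y (br a b) - B x (br a b) * B y (br c a)) *: br b c +
  (B x (br a b) * B y (br b c) - B x (br b c) * B y (br a b)) *: br c a.
Proof.
rewrite {1}(expand_coords x) {1}(expand_coords y); brlin.
rewrite (br_anticomm Hbr a b) (br_anticomm Hbr b c) (br_anticomm Hbr c a).
by apply/eqP; rewrite -subr_eq0; apply/eqP/coords_eq0; bilin; gram; ring.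
Qed.

(* h3 is identified with span(a, b, [a, b]) and h3^* with span([b, c], [c, a], c),
   the dual basis under B; these are the coordinates of x in that basis. *)
Definition to_b6 (x : V) : b6 R :=
  (\row_(j < 3) [:: B x (br b c); B x (br c a); B x c]`_j,
   \row_(j < 3) [:: B x a; B x b; B x (br a b)]`_j).

Definition of_b6 (p : b6 R) : V :=
  p.1 0 0 *: a + p.1 0 1 *: b + p.1 0 2 *: br a b +
  p.2 0 0 *: br b c + p.2 0 1 *: br c a + p.2 0 2 *: c.

Lemma to_b6_linear k x y : to_b6 (k *: x + y) =
  (k *: (to_b6 x).1 + (to_b6 y).1, k *: (to_b6 x).2 + (to_b6 y).2).
Proof.
by congr pair; apply/rowP => -[[|[|[|j]]] Hj]; rewrite !mxE //=; bilin.
Qed.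

Lemma to_b6K : cancel to_b6 of_b6.
Proof. by move=> x; rewrite /of_b6 !mxE /= [RHS]expand_coords. Qed.

Lemma of_b6K : cancel of_b6 to_b6.
Proof.
move=> [p1 p2]; congr pair; apply/rowP => -[[|[|[|j]]] Hj]; rewrite !mxE //=;
  rewrite /of_b6 /=; bilin; gram; rewrite ?(mulr0, mulr1, addr0, add0r);
  by congr (_ _ _); apply: val_inj.
Qed.

Lemma to_b6_form x y : b6form (to_b6 x) (to_b6 y) = B x y.
Proof.
rewrite /b6form /dpair /to_b6 !big_ord_recl !big_ord0 /= !mxE /=.
by rewrite [in RHS](expand_coords x) [in RHS](expand_coords y); bilin; gram; ring.
Qed.

Lemma to_b6_bracket x y : to_b6 (br x y) = b6br (to_b6 x) (to_b6 y).
Proof.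
rewrite /b6br /h3br /adstar /dpair /to_b6.
congr pair; apply/rowP => -[[|[|[|j]]] Hj];
  rewrite !mxE //= ?big_ord_recl ?big_ord0 /= ?mxE /=;
  by rewrite bracket_coords; bilin; gram; ring.
Qed.

Lemma isometric_to_b6 : isometric_iso br B to_b6.
Proof.
split; [exact: to_b6_linear | | exact: to_b6_bracket | exact: to_b6_form].
by exists of_b6; [exact: to_b6K | exact: of_b6K].
Qed.

End Coordinates.
End TwoStep.
End MetricLie.

Theorem corollary5p5 (R : realType) (V : vectType R)
    (br : V -> V -> V) (B : V -> V -> R) :
  butterfly_algebra br B -> exists phi : V -> b6 R, isometric_iso br B phi.
Proof.
case=> dimV [Hbr [Hnil _]] HB Hinv [Z [Zcomm Znrad]].
have [x [y [z Txyz]]] := commutator_nonradical_pairing Hbr HB Zcomm Znrad.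
have [a [b [c [[Baa Bbb Bcc] [Bab Bbc Bac] Tabc]]]] :=
  isotropic_triple Hbr HB Hinv Hnil Txyz.
exists (to_b6 br B a b c).
exact (isometric_to_b6 Hbr HB Hinv Hnil dimV Baa Bbb Bcc Bab Bbc Bac Tabc).
Qed.
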